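(* Let $n\ge 3$ and $V=\{d\in\{0,1\}^n: d_n=0\}$. For $\epsilon\in\{\text{even},\text{odd}\}$ let $V_\epsilon\subseteq V$ be the words whose number of digits $1$ has parity $\epsilon$, and let $\Gamma_\epsilon$ be the directed graph on $V_\epsilon$ whose arrows are: (i) every arrow of $L_n$ between two elements of $V_\epsilon$, and (ii) the additional arrows $d_1\dots d_{n-3}\,000\to d_1\dots d_{n-3}\,110$ whenever both ends lie in $V_\epsilon$. Then $V=V_{\text{even}}\sqcup V_{\text{odd}}$, every arrow of $L_n$ between elements of $V$ joins words of the same parity, and for each $\epsilon$ the map $d_1\dots d_{n-2}d_{n-1}0\mapsto d_1\dots d_{n-2}$ is an isomorphism of directed graphs $\Gamma_\epsilon\to L_{n-2}$.
   Context: For $m\ge 1$, $L_m$ is the directed graph on $\{0,1\}^m$ with arrows $u\,01\,v\to u\,10\,v$ (binary words $u,v$, $|u|+|v|=m-2$) and $u0\to u1$ ($|u|=m-1$); it is isomorphic (via Lascoux–Schützenberger notation) to the regular Hasse diagram of the Lagrangian Grassmannian of rank $m$. $V$ corresponds to the singular Hasse diagram $W^{\mathfrak{p},\{\alpha_n\}}$, and the arrows (ii) correspond to non-standard invariant differential operators constructed via the Penrose transform. *)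

(* Binary words are [seq bool] (false = digit 0, true = digit 1). *)
From mathcomp Require Import all_boot.
Set Implicit Arguments. Unset Strict Implicit. Unset Printing Implicit Defensive.

Definition Lvert (m : nat) (w : seq bool) : Prop := size w = m.

Definition Larrow (m : nat) (x y : seq bool) : Prop :=
  size x = m /\
  ((exists u v : seq bool, x = u ++ [:: false; true] ++ v /\ y = u ++ [:: true; false] ++ v)
   \/ (exists u : seq bool, x = rcons u false /\ y = rcons u true)).

Definition Vset (n : nat) (d : seq bool) : Prop := size d = n /\ last true d = false.

(* V_eps: parity of the number of 1's; eps = false = even, eps = true = odd. *)
Definition Veps (n : nat) (eps : bool) (d : seq bool) : Prop :=
  Vset n d /\ odd (count id d) = eps.

Definition extra_arrow (n : nat) (x y : seq bool) : Prop :=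
  exists w : seq bool, size w = n - 3 /\
    x = w ++ [:: false; false; false] /\ y = w ++ [:: true; true; false].

Definition Gamma_arrow (n : nat) (eps : bool) (x y : seq bool) : Prop :=
  Veps n eps x /\ Veps n eps y /\ (Larrow n x y \/ extra_arrow n x y).

Definition trunc2 (n : nat) (d : seq bool) : seq bool := take (n - 2) d.

From mathcomp Require Import all_boot.
From Corelib Require Import Setoid.

(* The inverse of the truncation on V_eps appends the digit d_{n-1} that
   restores the parity eps, then the final 0.  An arrow u01v -> u10v of L_n
   between such words either lies inside the first n-2 digits (and then the
   appended digit is unchanged), or moves the 1 of d_{n-1} into d_{n-2}; the
   latter, together with the extra arrows 000 -> 110, are exactly the lifts
   of the arrows u0 -> u1 of L_{n-2}, split according to d_{n-1}. *)

Definition swap_step (x y : seq bool) : Prop :=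
  exists u v, x = u ++ [:: false; true] ++ v /\ y = u ++ [:: true; false] ++ v.

Definition tail_step (x y : seq bool) : Prop :=
  exists u, x = rcons u false /\ y = rcons u true.

Lemma cat_pair (T : Type) (s : seq T) a b : s ++ [:: a; b] = rcons (rcons s a) b.
Proof. by rewrite -!cats1 -catA. Qed.

Lemma cat_triple (T : Type) (s : seq T) a b c :
  s ++ [:: a; b; c] = rcons (rcons (rcons s a) b) c.
Proof. by rewrite -!cats1 -!catA. Qed.

Lemma LarrowE m x y : Larrow m x y = (size x = m /\ (swap_step x y \/ tail_step x y)).
Proof. by []. Qed.

Lemma swap_step_count x y : swap_step x y -> count id x = count id y.
Proof. by case=> u [v [-> ->]]; rewrite !count_cat. Qed.

Lemma tail_step_count x y : tail_step x y -> count id y = (count id x).+1.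
Proof. by case=> u [-> ->]; rewrite -!cats1 !count_cat /= !addn0 addn1. Qed.

Lemma tail_step_rcons_false x y : tail_step x (rcons y false) -> False.
Proof. by case=> u [_ /rcons_inj]. Qed.

Lemma swap_step_rcons x y c c' :
  swap_step (rcons x c) (rcons y c') <->
  (c = c' /\ swap_step x y) \/ [/\ c = true, c' = false & tail_step x y].
Proof.
split.
- case=> u [v []]; case/lastP: v => [|v z].
    rewrite cats0 !cat_pair => /rcons_inj [-> ->] /rcons_inj [-> ->].
    by right; split=> //; exists u.
  rewrite -!rcons_cat => /rcons_inj [-> ->] /rcons_inj [-> ->].
  by left; split=> //; exists u, v.
- case=> [[<- [u [v [-> ->]]]] | [-> -> [u [-> ->]]]].
    by exists u, (rcons v c); rewrite -!rcons_cat.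
  by exists u, [::]; rewrite cats0 -!cats1 -!catA.
Qed.

Definition lift2 (eps : bool) (w : seq bool) : seq bool :=
  rcons (rcons w (odd (count id w) (+) eps)) false.

Lemma odd_count_rcons2 w a : odd (count id (rcons (rcons w a) false)) = odd (count id w) (+) a.
Proof. by rewrite -!cats1 !count_cat /= !addn0 oddD; case: a. Qed.

Lemma trunc2_lift2 n eps w : size w = n - 2 -> trunc2 n (lift2 eps w) = w.
Proof. by move=> hw; rewrite /trunc2 /lift2 -!cats1 -catA -hw take_size_cat. Qed.

Lemma VepsP n eps d : 2 <= n ->
  Veps n eps d <-> exists2 w, size w = n - 2 & d = lift2 eps w.
Proof.
move=> hn; split.
- case=> [[]]; case/lastP: d => [<- //|d b]; rewrite size_rcons last_rcons => hs ->.
  case/lastP: d hs => [|w a]; first by move=> h; rewrite -h in hn.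
  rewrite size_rcons odd_count_rcons2 => hs <-; exists w; first by rewrite -hs subn2.
  by rewrite /lift2; congr (rcons (rcons _ _) _); case: a; case: (odd _).
- case=> w hw ->; split; last by rewrite odd_count_rcons2; case: eps; case: (odd _).
  by rewrite /Vset !size_rcons hw -addn2 subnK // last_rcons.
Qed.
Arguments VepsP {n eps d}.

Lemma extra_arrow_rcons2 n w w' a a' : 3 <= n -> size w = n - 2 ->
  extra_arrow n (rcons (rcons w a) false) (rcons (rcons w' a') false) <->
  [/\ a = false, a' = true & tail_step w w'].
Proof.
move=> hn hw; split.
- case=> z [_ [ex ey]]; move: ex ey; rewrite !cat_triple.
  by move=> /rcons_inj [/rcons_inj [-> ->]] /rcons_inj [/rcons_inj [-> ->]]; split=> //; exists z.
- case=> -> -> [z [ew ew']]; exists z; split; last by rewrite ew ew' !cat_triple.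
  by apply: succn_inj; rewrite -(size_rcons z false) -ew hw subnSK.
Qed.

Lemma arrow_rcons2 n w w' a a' : 3 <= n -> size w = n - 2 ->
  Larrow n (rcons (rcons w a) false) (rcons (rcons w' a') false) \/
  extra_arrow n (rcons (rcons w a) false) (rcons (rcons w' a') false) <->
  (a = a' /\ swap_step w w') \/ (a' = ~~ a /\ tail_step w w').
Proof.
move=> hn hw; have size_w : size (rcons (rcons w a) false) = n.
  by rewrite !size_rcons hw -addn2 subnK // ltnW.
rewrite LarrowE extra_arrow_rcons2 //; split.
- case=> [[_ [S | /tail_step_rcons_false //]] | [-> -> T]]; last by right.
  case/swap_step_rcons: S => [[_ /swap_step_rcons [[-> S] | [-> -> T]]] | [? _ _]] //.
  + by left.
  + by right.
- case=> [[<- S] | [-> T]].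
    by left; split=> //; left; apply/swap_step_rcons; left; split=> //; apply/swap_step_rcons; left.
  case: a size_w => size_w; last by right.
  by left; split=> //; left; apply/swap_step_rcons; left; split=> //; apply/swap_step_rcons; right.
Qed.

Lemma Gamma_arrow_lift2 n eps w w' : 3 <= n -> size w = n - 2 -> size w' = n - 2 ->
  Gamma_arrow n eps (lift2 eps w) (lift2 eps w') <-> Larrow (n - 2) w w'.
Proof.
move=> hn hw hw'; have hn2 : 2 <= n by exact: ltnW.
have Vw : Veps n eps (lift2 eps w) by apply/VepsP => //; exists w.
have Vw' : Veps n eps (lift2 eps w') by apply/VepsP => //; exists w'.
rewrite /Gamma_arrow {1 2}/lift2 arrow_rcons2 // LarrowE.
split; first by case=> _ [_ [[_ S] | [_ T]]]; split=> //; [left | right].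
case=> _ [S | T]; do 2 split=> //.
  by left; split=> //; move/swap_step_count: S => ->.
by right; split=> //; move/tail_step_count: T => -> /=; rewrite addNb.
Qed.

Theorem mainTheorem13 (n : nat) (hn : 3 <= n) :
  (* V = V_even ⊔ V_odd *)
  (forall d, Vset n d <-> (Veps n false d \/ Veps n true d)) /\
  (forall d, ~ (Veps n false d /\ Veps n true d)) /\
  (* arrows of L_n inside V preserve parity *)
  (forall d e, Vset n d -> Vset n e -> Larrow n d e ->
     odd (count id d) = odd (count id e)) /\
  (* trunc2 is an isomorphism of directed graphs Gamma_eps -> L_{n-2} *)
  (forall eps : bool,
     (forall d, Veps n eps d -> Lvert (n - 2) (trunc2 n d)) /\
     (forall d e, Veps n eps d -> Veps n eps e -> trunc2 n d = trunc2 n e -> d = e) /\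
     (forall w, Lvert (n - 2) w -> exists2 d, Veps n eps d & trunc2 n d = w) /\
     (forall d e, Veps n eps d -> Veps n eps e ->
        (Gamma_arrow n eps d e <-> Larrow (n - 2) (trunc2 n d) (trunc2 n e)))).
Proof.
have hn2 : 2 <= n by exact: ltnW.
split.
  move=> d; split=> [hV | [[] | []] //].
  by case parity: (odd (count id d)); [right | left].
split; first by move=> d [[_ even] [_]]; rewrite even.
split.
  move=> d e _ [_ ee]; rewrite LarrowE => -[_ [/swap_step_count -> //|[u [_ eu]]]].
  by rewrite eu last_rcons in ee.
move=> eps; split.
  by move=> d /(VepsP hn2) [w hw ->]; rewrite /Lvert trunc2_lift2.
split.
  move=> d e /(VepsP hn2) [w hw ->] /(VepsP hn2) [w' hw' ->].
  by rewrite !trunc2_lift2 // => ->.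
split.
  by move=> w hw; exists (lift2 eps w); [apply/VepsP => //; exists w | exact: trunc2_lift2].
move=> d e /(VepsP hn2) [w hw ->] /(VepsP hn2) [w' hw' ->].
by rewrite !trunc2_lift2 //; exact: Gamma_arrow_lift2.
Qed.
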